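(* Let ${\cal X}$ be a real Hilbert space, $0\le\tau_{\min}\le\tau_{\max}\le\infty$ and $\mathrm{proj}(t):=\min\{\max\{t,\tau_{\min}\},\tau_{\max}\}$ for $t\in\mathbb{R}$. Let $s,z\in{\cal X}$ with $s\ne0$, set $\rho:=z^Ts$, $$\lambda:=\frac{\|s\|^2+\|z\|^2-\sqrt{(\|s\|^2-\|z\|^2)^2+4\rho^2}}{2},$$ and $$\tau^s:=\mathrm{proj}\Big(\frac{\rho}{\|s\|^2}\Big),\quad\tau^g:=\mathrm{proj}\Big(\frac{\|z\|}{\|s\|}\Big),\quad\tau^z:=\mathrm{proj}\Big(\frac{\|z\|^2}{\rho}\Big),\quad\tau^u:=\mathrm{proj}\Big(\frac{\|z\|^2-\lambda}{\rho}\Big),$$ where $\tau^z$ and $\tau^u$ are defined only if $\rho\ne0$. If $\rho>0$, then $0\le\tau^s\le\tau^u\le\tau^z$ and $0\le\tau^s\le\tau^g\le\tau^z$. If $\rho\le0$, then $0\le\tau_{\min}=\tau^s\le\tau^g$.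
   Context: ${\cal X}$ is a real Hilbert space with inner product written $z^Ts$ and induced norm $\|\cdot\|$. *)

From HB Require Import structures.
From mathcomp Require Import all_boot all_order all_algebra.
From mathcomp Require Import all_classical all_reals ereal.
Set Implicit Arguments. Unset Strict Implicit. Unset Printing Implicit Defensive.
Import Order.TTheory GRing.Theory Num.Theory.
Local Open Scope ring_scope.

Definition is_inner_product (R : realType) (V : lmodType R) (ip : V -> V -> R) : Prop :=
  [/\ (forall x y, ip x y = ip y x),
      (forall a x y z, ip (a *: x + y) z = a * ip x z + ip y z),
      (forall x, 0 <= ip x x) &
      (forall x, ip x x = 0 -> x = 0)].

Definition ipnorm (R : realType) (V : lmodType R) (ip : V -> V -> R) (x : V) : R :=
  Num.sqrt (ip x x).

Definition proj (R : realType) (tmin : R) (tmax : \bar R) (t : R) : \bar R :=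
  Order.min (Order.max t tmin)%:E tmax.

Definition lam (R : realType) (V : lmodType R) (ip : V -> V -> R) (s z : V) : R :=
  let ns := ipnorm ip s in let nz := ipnorm ip z in let rho := ip z s in
  (ns ^+ 2 + nz ^+ 2 - Num.sqrt ((ns ^+ 2 - nz ^+ 2) ^+ 2 + 4 * rho ^+ 2)) / 2.

Definition tau_s (R : realType) (V : lmodType R) (ip : V -> V -> R)
  (tmin : R) (tmax : \bar R) (s z : V) : \bar R :=
  @proj R tmin tmax (ip z s / ipnorm ip s ^+ 2).
Definition tau_g (R : realType) (V : lmodType R) (ip : V -> V -> R)
  (tmin : R) (tmax : \bar R) (s z : V) : \bar R :=
  @proj R tmin tmax (@ipnorm R V ip z / ipnorm ip s).
(* tau_z, tau_u only meaningful when rho <> 0 *)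
Definition tau_z (R : realType) (V : lmodType R) (ip : V -> V -> R)
  (tmin : R) (tmax : \bar R) (s z : V) : \bar R :=
  @proj R tmin tmax (@ipnorm R V ip z ^+ 2 / ip z s).
Definition tau_u (R : realType) (V : lmodType R) (ip : V -> V -> R)
  (tmin : R) (tmax : \bar R) (s z : V) : \bar R :=
  @proj R tmin tmax ((@ipnorm R V ip z ^+ 2 - lam ip s z) / ip z s).

From Pilot Require Import Defs.
From HB Require Import structures.
From mathcomp Require Import all_boot all_order all_algebra.
From mathcomp Require Import all_classical all_reals ereal.
From mathcomp Require Import ring lra.
Import Order.TTheory GRing.Theory Num.Theory.
Local Open Scope ring_scope.

(* Since proj is monotone, each inequality between step sizes reduces, after
   cross-multiplying by the positive denominators, to an inequality between
   ||s||^2, ||z||^2, rho and lambda.  These follow from Cauchy-Schwarz,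
   rho <= ||s|| ||z||, and from lambda being the smaller eigenvalue of the Gram
   matrix [[||s||^2, rho], [rho, ||z||^2]]: hence 0 <= lambda <= ||z||^2 and
   (||s||^2 - lambda) (||z||^2 - lambda) = rho^2.  When rho <= 0 the quotient
   rho / ||s||^2 is below tmin >= 0, so proj clamps it to tmin. *)

Lemma ler_pdiv_cross (R : numFieldType) (x y q d : R) :
  0 < q -> 0 < d -> (x / q <= y / d) = (x * d <= y * q).
Proof. by move=> q_gt0 d_gt0; rewrite ler_pdivlMr // mulrAC ler_pdivrMr. Qed.

Section MinEigenvalue.
Context {R : rcfType}.
Implicit Types a b c : R.

Definition min_eig2 a c b : R :=
  (a + c - Num.sqrt ((a - c) ^+ 2 + 4 * b ^+ 2)) / 2.

Lemma min_eig2_charpoly a c b : (a - min_eig2 a c b) * (c - min_eig2 a c b) = b ^+ 2.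
Proof.
rewrite /min_eig2; set D := Num.sqrt _.
have D2 : D ^+ 2 = (a - c) ^+ 2 + 4 * b ^+ 2.
  by rewrite sqr_sqrtr // addr_ge0 ?sqr_ge0 // mulr_ge0 ?sqr_ge0.
have -> : (a - (a + c - D) / 2) * (c - (a + c - D) / 2) = (D ^+ 2 - (a - c) ^+ 2) / 4.
  by field.
by rewrite D2 addrC addKr mulrC mulKf.
Qed.

Lemma min_eig2_le a c b : min_eig2 a c b <= c.
Proof.
have : a - c <= Num.sqrt ((a - c) ^+ 2 + 4 * b ^+ 2).
  apply: le_trans (ler_norm _) _; rewrite -sqrtr_sqr ler_wsqrtr // lerDl.
  by rewrite mulr_ge0 ?sqr_ge0.
by rewrite /min_eig2; lra.
Qed.

Lemma min_eig2_ge0 a c b : 0 <= a -> 0 <= c -> b ^+ 2 <= a * c -> 0 <= min_eig2 a c b.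
Proof.
move=> a_ge0 c_ge0 b2_le; have : Num.sqrt ((a - c) ^+ 2 + 4 * b ^+ 2) <= a + c.
  rewrite -[leRHS]ger0_norm ?addr_ge0 // -sqrtr_sqr ler_wsqrtr //; nra.
by rewrite /min_eig2; lra.
Qed.

Lemma mul_min_eig2_le a c b : 0 <= a -> 0 <= c -> b ^+ 2 <= a * c ->
  a * min_eig2 a c b <= a * c - b ^+ 2.
Proof.
move=> a_ge0 c_ge0 b2_le.
(* By the characteristic equation, a c - b^2 - a l = l (c - l). *)
have := min_eig2_charpoly a c b; have := min_eig2_le a c b.
have := @min_eig2_ge0 a c b a_ge0 c_ge0 b2_le; set l := min_eig2 a c b; nra.
Qed.

End MinEigenvalue.

Section InnerProduct.
Variables (R : realType) (V : lmodType R) (ip : V -> V -> R).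
Hypothesis ipP : is_inner_product ip.

Lemma ipr0 x : ip x 0 = 0.
Proof.
have [ip_sym ip_lin _ _] := ipP.
rewrite ip_sym; have := ip_lin 1 0 0 x; rewrite scale1r addr0; lra.
Qed.

Lemma ip_cauchy_schwarz x y : ip x y ^+ 2 <= ip x x * ip y y.
Proof.
have [ip_sym ip_lin ip_ge0 ip_def] := ipP.
have [/ip_def -> | yy_neq0] := eqVneq (ip y y) 0; first by rewrite !ipr0 expr0n mulr0.
have yy_gt0 : 0 < ip y y by rewrite lt_neqAle eq_sym yy_neq0 ip_ge0.
set t := ip x y / ip y y.
have yyt : ip y y * t = ip x y by rewrite mulrC divfK.
have := ip_ge0 (- t *: y + x).
rewrite ip_lin (ip_sym y) (ip_sym x) !ip_lin (ip_sym y x); nra.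
Qed.

Lemma ipnorm_sqr x : ipnorm ip x ^+ 2 = ip x x.
Proof. by have [_ _ ip_ge0 _] := ipP; rewrite sqr_sqrtr. Qed.

Lemma ipnorm_gt0 x : x != 0 -> 0 < ipnorm ip x.
Proof.
have [_ _ ip_ge0 ip_def] := ipP.
move=> x_neq0; rewrite sqrtr_gt0 lt_neqAle ip_ge0 andbT eq_sym.
by apply: contra_neq x_neq0 => /ip_def.
Qed.

Lemma ip_le_ipnorm x y : ip x y <= ipnorm ip x * ipnorm ip y.
Proof.
apply: le_trans (ler_norm _) _.
rewrite -sqrtr_sqr /ipnorm -sqrtrM; last by have [_ _ ip_ge0 _] := ipP.
by rewrite ler_wsqrtr // ip_cauchy_schwarz.
Qed.

End InnerProduct.

Local Open Scope ereal_scope.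

Section Proj.
Context {R : realType}.
Variables (tmin : R) (tmax : \bar R).
Hypothesis tmin_le_tmax : tmin%:E <= tmax.

Lemma proj_homo : {homo Defs.proj tmin tmax : x y / (x <= y)%R >-> x <= y}.
Proof. by move=> x y xy; apply: le_min2 => //; rewrite lee_fin le_max2. Qed.

Lemma proj_ge_tmin t : tmin%:E <= Defs.proj tmin tmax t.
Proof. by rewrite /Defs.proj le_min tmin_le_tmax lee_fin le_max lexx orbT. Qed.

Lemma proj_ge0 t : (0 <= tmin)%R -> 0 <= Defs.proj tmin tmax t.
Proof. by move=> tmin_ge0; apply: le_trans (proj_ge_tmin t); rewrite lee_fin. Qed.

Lemma proj_tmin t : (t <= tmin)%R -> Defs.proj tmin tmax t = tmin%:E.
Proof. by move=> t_le; rewrite /Defs.proj (max_r t_le) (min_l tmin_le_tmax). Qed.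

End Proj.

Theorem lemma3p2 (R : realType) (V : lmodType R) (ip : V -> V -> R)
  (tmin : R) (tmax : \bar R) (s z : V) :
  is_inner_product ip ->
  (0 <= tmin)%R -> tmin%:E <= tmax ->
  s <> 0%R ->
  ((0 < ip z s)%R ->
     [/\ 0 <= tau_s ip tmin tmax s z,
         tau_s ip tmin tmax s z <= tau_u ip tmin tmax s z,
         tau_u ip tmin tmax s z <= tau_z ip tmin tmax s z,
         tau_s ip tmin tmax s z <= tau_g ip tmin tmax s z &
         tau_g ip tmin tmax s z <= tau_z ip tmin tmax s z]) /\
  ((ip z s <= 0)%R ->
     [/\ 0 <= tmin%:E, tmin%:E = tau_s ip tmin tmax s z &
         tau_s ip tmin tmax s z <= tau_g ip tmin tmax s z]).
Proof.
move=> ipP tmin_ge0 tmin_le s_neq0.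
rewrite /tau_s /tau_u /tau_z /tau_g.
set ns := ipnorm ip s; set nz := ipnorm ip z; set r := ip z s.
rewrite -[lam ip s z]/(min_eig2 (ns ^+ 2)%R (nz ^+ 2)%R r); set l := min_eig2 _ _ _.
have ns_gt0 : (0 < ns)%R by apply: ipnorm_gt0 => //; apply/eqP.
have nz_ge0 : (0 <= nz)%R by apply: sqrtr_ge0.
have r_le : (r <= ns * nz)%R by rewrite mulrC; apply: ip_le_ipnorm.
have r2_le : (r ^+ 2 <= ns ^+ 2 * nz ^+ 2)%R.
  by rewrite /r !ipnorm_sqr // mulrC ip_cauchy_schwarz.
have l_ge0 : (0 <= l)%R by apply: min_eig2_ge0; rewrite ?sqr_ge0.
have l_le : (ns ^+ 2 * l <= ns ^+ 2 * nz ^+ 2 - r ^+ 2)%R.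
  by apply: mul_min_eig2_le; rewrite ?sqr_ge0.
have ns2_gt0 : (0 < ns ^+ 2)%R by apply: exprn_gt0.
split=> [r_gt0 | r_le0].
  have s_le_u : (r * r <= (nz ^+ 2 - l) * ns ^+ 2)%R by rewrite -expr2; lra.
  have u_le_z : ((nz ^+ 2 - l) * r <= nz ^+ 2 * r)%R by rewrite ler_pM2r //; lra.
  have s_le_g : (r * ns <= nz * ns ^+ 2)%R by rewrite expr2 mulrA ler_pM2r // mulrC.
  have g_le_z : (nz * r <= nz ^+ 2 * ns)%R.
    by rewrite expr2 -mulrA [(nz * ns)%R]mulrC; apply: ler_wpM2l.
  by split; [exact: proj_ge0 | ..]; apply: proj_homo; rewrite ler_pdiv_cross.
have r_div_le0 : (r / ns ^+ 2 <= 0)%R by rewrite pmulr_lle0 ?invr_gt0.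
split; first by rewrite lee_fin.
  by rewrite proj_tmin // (le_trans r_div_le0).
by apply: proj_homo; apply: le_trans r_div_le0 _; exact: divr_ge0 (ltW ns_gt0).
Qed.
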